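(* Let $\mathcal{D}$ and $\mathcal{X}$ be finite sets, $\mathcal{Y}=\{0,1\}$, and let $p_{D,X,Y}$ be a given joint probability mass function on $\mathcal{D}\times\mathcal{X}\times\mathcal{Y}$ (with its marginals and conditionals, e.g. $p_{X,Y}$, $p_{X,Y|D}$, regarded as given). Let $p_{Y_T}$ be a given target distribution on $\mathcal{Y}$, let $\delta:(\mathcal{X}\times\mathcal{Y})^2\to\mathbb{R}_+$ be a distortion function with $\delta((x,y),(x,y))=0$, let $\epsilon_{y,d}$, $\epsilon_{y,d_1,d_2}$, $c_{d,x,y}$ be given thresholds, let $\Delta(\cdot,\cdot)$ be a dissimilarity measure between probability distributions on $\mathcal{X}\times\mathcal{Y}$, and let $J(\cdot,\cdot)$ be a distance function between real numbers (probabilities). Consider the optimization problem over the conditional distribution (randomized mapping) $p_{\hat X,\hat Y|X,Y,D}$ from $\mathcal{D}\times\mathcal{X}\times\mathcal{Y}$ to $\mathcal{X}\times\mathcal{Y}$: \[ \min_{p_{\hat X,\hat Y|X,Y,D}} \Delta\big(p_{\hat X,\hat Y},p_{X,Y}\big) \] subject to (i) $J\big(p_{\hat Y|D}(y|d),p_{Y_T}(y)\big)\le \epsilon_{y,d}$ for all $d\in\mathcal{D}$, $y\in\{0,1\}$; (ii) $\sum_{\hat x,\hat y} p_{\hat X,\hat Y|D,X,Y}(\hat x,\hat y|d,x,y)\,\delta((x,y),(\hat x,\hat y))\le c_{d,x,y}$ for all $(d,x,y)\in\mathcal{D}\times\mathcal{X}\times\mathcal{Y}$; (iii) $p_{\hat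 X,\hat Y|X,Y,D}$ is a valid conditional probability distribution. Here $p_{\hat X,\hat Y}(\hat x,\hat y)=\sum_{d,x,y}p_{D,X,Y}(d,x,y)\,p_{\hat X,\hat Y|D,X,Y}(\hat x,\hat y|d,x,y)$ and $p_{\hat Y|D}(\hat y|d)=\sum_{\hat x}\sum_{x,y}p_{X,Y|D}(x,y|d)\,p_{\hat X,\hat Y|D,X,Y}(\hat x,\hat y|d,x,y)$. Then this problem is a convex (respectively quasiconvex) optimization problem if $\Delta(\cdot,\cdot)$ is convex (respectively quasiconvex) in its first argument with the second fixed and $J(\cdot,\cdot)$ is quasiconvex in its first argument with the second fixed. If constraint (i) is replaced by $J\big(p_{\hat Y|D}(y|d_1),p_{\hat Y|D}(y|d_2)\big)\le\epsilon_{y,d_1,d_2}$ for all $d_1,d_2\in\mathcal{D}$, $y\in\{0,1\}$, then the same conclusion holds provided $\Delta$ is (quasi)convex in its first argument and $J$ is jointly quasiconvex in both arguments.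
   Context: $D$ denotes discriminatory (protected) variables, $X$ other features, $Y$ a binary outcome; $(\hat X,\hat Y)$ is the transformed data obtained by applying the randomized mapping $p_{\hat X,\hat Y|X,Y,D}$ to $(D,X,Y)\sim p_{D,X,Y}$, with $D$ retained unchanged. *)

From mathcomp Require Import all_boot all_order all_algebra.
Set Implicit Arguments. Unset Strict Implicit. Unset Printing Implicit Defensive.
Import Order.TTheory GRing.Theory Num.Theory.
Local Open Scope ring_scope.

Section Defs.
Variables (R : realFieldType) (D X : finType).

Definition is_pmf_DXY (p : D -> X -> bool -> R) : Prop :=
  (forall d x y, 0 <= p d x y) /\ \sum_(d : D) \sum_(x : X) \sum_(y : bool) p d x y = 1.

Definition is_pmf_XY (q : X -> bool -> R) : Prop :=
  (forall x y, 0 <= q x y) /\ \sum_(x : X) \sum_(y : bool) q x y = 1.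

Definition is_pmf_Y (q : bool -> R) : Prop :=
  (forall y, 0 <= q y) /\ \sum_(y : bool) q y = 1.

(* randomized mapping p_{Xh,Yh | D,X,Y}: M d x y xh yh *)
Definition mapping := D -> X -> bool -> X -> bool -> R.

Definition valid_cond (M : mapping) : Prop :=
  forall d x y, (forall xh yh, 0 <= M d x y xh yh) /\
                \sum_(xh : X) \sum_(yh : bool) M d x y xh yh = 1.

Definition pXY (p : D -> X -> bool -> R) : X -> bool -> R :=
  fun x y => \sum_(d : D) p d x y.

Definition pD (p : D -> X -> bool -> R) (d : D) : R :=
  \sum_(x : X) \sum_(y : bool) p d x y.

(* p_{X,Y|D}(x,y|d); convention: 0 when p_D(d) = 0 (MathComp x / 0 = 0) *)
Definition pXYgD (p : D -> X -> bool -> R) (d : D) (x : X) (y : bool) : R :=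
  p d x y / pD p d.

Definition phat (p : D -> X -> bool -> R) (M : mapping) : X -> bool -> R :=
  fun xh yh => \sum_(d : D) \sum_(x : X) \sum_(y : bool) p d x y * M d x y xh yh.

Definition pYhgD (p : D -> X -> bool -> R) (M : mapping) (yh : bool) (d : D) : R :=
  \sum_(xh : X) \sum_(x : X) \sum_(y : bool) pXYgD p d x y * M d x y xh yh.

Definition constr_i (p : D -> X -> bool -> R) (pYT : bool -> R)
  (J : R -> R -> R) (eps : bool -> D -> R) (M : mapping) : Prop :=
  forall d y, J (pYhgD p M y d) (pYT y) <= eps y d.

Definition constr_i' (p : D -> X -> bool -> R)
  (J : R -> R -> R) (eps2 : bool -> D -> D -> R) (M : mapping) : Prop :=
  forall d1 d2 y, J (pYhgD p M y d1) (pYhgD p M y d2) <= eps2 y d1 d2.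

Definition constr_ii (delta : X * bool -> X * bool -> R) (c : D -> X -> bool -> R)
  (M : mapping) : Prop :=
  forall d x y, \sum_(xh : X) \sum_(yh : bool) M d x y xh yh * delta (x, y) (xh, yh)
                <= c d x y.

Definition mix_map (t : R) (M1 M2 : mapping) : mapping :=
  fun d x y xh yh => t * M1 d x y xh yh + (1 - t) * M2 d x y xh yh.

Definition mix_XY (t : R) (q1 q2 : X -> bool -> R) : X -> bool -> R :=
  fun x y => t * q1 x y + (1 - t) * q2 x y.

Definition convex_set_map (S : mapping -> Prop) : Prop :=
  forall M1 M2 t, S M1 -> S M2 -> 0 <= t <= 1 -> S (mix_map t M1 M2).

Definition convex_on_map (S : mapping -> Prop) (f : mapping -> R) : Prop :=
  forall M1 M2 t, S M1 -> S M2 -> 0 <= t <= 1 ->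
    f (mix_map t M1 M2) <= t * f M1 + (1 - t) * f M2.

Definition quasiconvex_on_map (S : mapping -> Prop) (f : mapping -> R) : Prop :=
  forall M1 M2 t, S M1 -> S M2 -> 0 <= t <= 1 ->
    f (mix_map t M1 M2) <= Num.max (f M1) (f M2).

Definition convex_problem (S : mapping -> Prop) (f : mapping -> R) : Prop :=
  convex_set_map S /\ convex_on_map S f.

Definition quasiconvex_problem (S : mapping -> Prop) (f : mapping -> R) : Prop :=
  convex_set_map S /\ quasiconvex_on_map S f.

Definition Delta_convex1 (Delta : (X -> bool -> R) -> (X -> bool -> R) -> R) : Prop :=
  forall q1 q2 q0 t, is_pmf_XY q1 -> is_pmf_XY q2 -> is_pmf_XY q0 -> 0 <= t <= 1 ->
    Delta (mix_XY t q1 q2) q0 <= t * Delta q1 q0 + (1 - t) * Delta q2 q0.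

Definition Delta_quasiconvex1 (Delta : (X -> bool -> R) -> (X -> bool -> R) -> R) : Prop :=
  forall q1 q2 q0 t, is_pmf_XY q1 -> is_pmf_XY q2 -> is_pmf_XY q0 -> 0 <= t <= 1 ->
    Delta (mix_XY t q1 q2) q0 <= Num.max (Delta q1 q0) (Delta q2 q0).

Definition feasible1 p pYT J eps delta c (M : mapping) : Prop :=
  constr_i p pYT J eps M /\ constr_ii delta c M /\ valid_cond M.

Definition feasible2 p J eps2 delta c (M : mapping) : Prop :=
  constr_i' p J eps2 M /\ constr_ii delta c M /\ valid_cond M.

Definition objective (Delta : (X -> bool -> R) -> (X -> bool -> R) -> R) p (M : mapping) : R :=
  Delta (phat p M) (pXY p).

End Defs.

Definition J_quasiconvex1 (R : realFieldType) (J : R -> R -> R) : Prop :=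
  forall a1 a2 b t, 0 <= t <= 1 ->
    J (t * a1 + (1 - t) * a2) b <= Num.max (J a1 b) (J a2 b).

Definition J_quasiconvex_joint (R : realFieldType) (J : R -> R -> R) : Prop :=
  forall a1 a2 b1 b2 t, 0 <= t <= 1 ->
    J (t * a1 + (1 - t) * a2) (t * b1 + (1 - t) * b2) <= Num.max (J a1 b1) (J a2 b2).

From mathcomp Require Import all_boot all_order all_algebra.
From mathcomp Require Import ring.
From Stdlib Require Import FunctionalExtensionality.
Import Order.TTheory GRing.Theory Num.Theory.
Local Open Scope ring_scope.

(* Both the output law [phat p M] and the conditionals [pYhgD p M y d] are
   linear in the mapping [M], and constraints (ii) and (iii) are linear
   (in)equalities in [M].  Hence mixing two feasible mappings keeps (ii) and
   (iii), and (quasi)convexity of [J] bounds the mixed fairness term by the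
   larger of the two feasible ones.  The objective is [Delta] composed with
   the affine map [M |-> phat p M], which lands in pmfs on X x Y, so it
   inherits the (quasi)convexity of [Delta] in its first argument. *)

Section ConvexCombination.
Variable R : realFieldType.

Lemma sumr_lincomb (I : finType) (F G : I -> R) (t s : R) :
  \sum_i (t * F i + s * G i) = t * \sum_i F i + s * \sum_i G i.
Proof. by rewrite big_split -!mulr_sumr. Qed.

Lemma mix_ge0 (t a b : R) :
  0 <= t <= 1 -> 0 <= a -> 0 <= b -> 0 <= t * a + (1 - t) * b.
Proof.
by move=> /andP[t_ge0 t_le1] a_ge0 b_ge0; rewrite addr_ge0 ?mulr_ge0 ?subr_ge0.
Qed.

Lemma mix_le (t a b c : R) :
  0 <= t <= 1 -> a <= c -> b <= c -> t * a + (1 - t) * b <= c.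
Proof.
move=> /andP[t_ge0 t_le1] a_le b_le.
apply: (@le_trans _ _ (t * c + (1 - t) * c)); last by rewrite -mulrDl subrKC mul1r.
by rewrite lerD // ler_wpM2l // subr_ge0.
Qed.

Lemma exchange_big_outer (I J K : finType) (F : I -> J -> K -> R) :
  \sum_i \sum_j \sum_k F i j k = \sum_k \sum_i \sum_j F i j k.
Proof. by under eq_bigr do rewrite exchange_big; exact: exchange_big. Qed.

End ConvexCombination.

Section LinearInMapping.
Variables (R : realFieldType) (D X : finType).
Implicit Types (p : D -> X -> bool -> R) (M : mapping R D X).

Lemma sum_mix_map (w : D -> X -> bool -> X -> bool -> R) M1 M2 t d x y :
  \sum_(xh : X) \sum_(yh : bool) mix_map t M1 M2 d x y xh yh * w d x y xh yh =
  t * (\sum_(xh : X) \sum_(yh : bool) M1 d x y xh yh * w d x y xh yh) +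
  (1 - t) * (\sum_(xh : X) \sum_(yh : bool) M2 d x y xh yh * w d x y xh yh).
Proof.
rewrite -sumr_lincomb; apply: eq_bigr => xh _.
rewrite -sumr_lincomb; apply: eq_bigr => yh _.
by rewrite /mix_map; ring.
Qed.

Lemma pYhgD_mix p M1 M2 t y d :
  pYhgD p (mix_map t M1 M2) y d = t * pYhgD p M1 y d + (1 - t) * pYhgD p M2 y d.
Proof.
rewrite /pYhgD -sumr_lincomb; apply: eq_bigr => xh _.
rewrite -sumr_lincomb; apply: eq_bigr => x _.
rewrite -sumr_lincomb; apply: eq_bigr => y' _.
by rewrite /mix_map; ring.
Qed.

Lemma phat_mix p M1 M2 t :
  phat p (mix_map t M1 M2) = mix_XY t (phat p M1) (phat p M2).
Proof.
apply: functional_extensionality => xh; apply: functional_extensionality => yh.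
rewrite /phat /mix_XY -sumr_lincomb; apply: eq_bigr => d _.
rewrite -sumr_lincomb; apply: eq_bigr => x _.
rewrite -sumr_lincomb; apply: eq_bigr => y _.
by rewrite /mix_map; ring.
Qed.

Lemma valid_cond_mix M1 M2 t :
  valid_cond M1 -> valid_cond M2 -> 0 <= t <= 1 -> valid_cond (mix_map t M1 M2).
Proof.
move=> V1 V2 t01 d x y.
have [M1_ge0 M1_sum1] := V1 d x y; have [M2_ge0 M2_sum1] := V2 d x y.
split=> [xh yh|]; first exact: mix_ge0 t01 (M1_ge0 xh yh) (M2_ge0 xh yh).
rewrite /mix_map; under eq_bigr do rewrite sumr_lincomb.
by rewrite sumr_lincomb M1_sum1 M2_sum1 !mulr1 subrKC.
Qed.

Lemma constr_ii_mix delta c M1 M2 t :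
  constr_ii delta c M1 -> constr_ii delta c M2 -> 0 <= t <= 1 ->
  constr_ii delta c (mix_map t M1 M2).
Proof.
move=> C1 C2 t01 d x y.
rewrite (sum_mix_map (fun _ x y xh yh => delta (x, y) (xh, yh))).
exact: mix_le t01 (C1 d x y) (C2 d x y).
Qed.

Lemma constr_i_mix p pYT J eps M1 M2 t :
  J_quasiconvex1 J ->
  constr_i p pYT J eps M1 -> constr_i p pYT J eps M2 -> 0 <= t <= 1 ->
  constr_i p pYT J eps (mix_map t M1 M2).
Proof.
move=> J_qcvx C1 C2 t01 d y; rewrite pYhgD_mix.
by apply: le_trans (J_qcvx _ _ _ _ t01) _; rewrite ge_max C1 C2.
Qed.

Lemma constr_i'_mix p J eps2 M1 M2 t :
  J_quasiconvex_joint J ->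
  constr_i' p J eps2 M1 -> constr_i' p J eps2 M2 -> 0 <= t <= 1 ->
  constr_i' p J eps2 (mix_map t M1 M2).
Proof.
move=> J_qcvx C1 C2 t01 d1 d2 y; rewrite !pYhgD_mix.
by apply: le_trans (J_qcvx _ _ _ _ _ t01) _; rewrite ge_max C1 C2.
Qed.

Lemma pXY_pmf p : is_pmf_DXY p -> is_pmf_XY (pXY p).
Proof.
move=> [p_ge0 p_sum1]; split=> [x y|]; first exact: sumr_ge0.
by rewrite -p_sum1 /pXY exchange_big_outer.
Qed.

Lemma sum_phat p M :
  \sum_(xh : X) \sum_(yh : bool) phat p M xh yh =
  \sum_d \sum_x \sum_y p d x y * \sum_(xh : X) \sum_(yh : bool) M d x y xh yh.
Proof.
rewrite /phat exchange_big_outer; apply: eq_bigr => d _.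
rewrite exchange_big_outer; apply: eq_bigr => x _.
rewrite exchange_big_outer; apply: eq_bigr => y _.
by rewrite mulr_sumr; apply: eq_bigr => xh _; rewrite mulr_sumr.
Qed.

Lemma phat_pmf p M : is_pmf_DXY p -> valid_cond M -> is_pmf_XY (phat p M).
Proof.
move=> [p_ge0 p_sum1] V; split=> [xh yh|].
  by do 3![apply: sumr_ge0 => ? _]; rewrite mulr_ge0 ?(proj1 (V _ _ _)).
rewrite sum_phat -p_sum1; do 3![apply: eq_bigr => ? _].
by rewrite (proj2 (V _ _ _)) mulr1.
Qed.

End LinearInMapping.

Section ProblemConvexity.
Variables (R : realFieldType) (D X : finType).
Variables (p : D -> X -> bool -> R) (Delta : (X -> bool -> R) -> (X -> bool -> R) -> R).
Hypothesis p_pmf : is_pmf_DXY p.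

Lemma objective_convex (S : mapping R D X -> Prop) :
  Delta_convex1 Delta -> (forall M, S M -> valid_cond M) ->
  convex_on_map S (objective Delta p).
Proof.
move=> Delta_cvx S_valid M1 M2 t S1 S2 t01; rewrite /objective phat_mix.
apply: Delta_cvx => //; last exact: pXY_pmf.
- exact: phat_pmf p_pmf (S_valid _ S1).
- exact: phat_pmf p_pmf (S_valid _ S2).
Qed.

Lemma objective_quasiconvex (S : mapping R D X -> Prop) :
  Delta_quasiconvex1 Delta -> (forall M, S M -> valid_cond M) ->
  quasiconvex_on_map S (objective Delta p).
Proof.
move=> Delta_qcvx S_valid M1 M2 t S1 S2 t01; rewrite /objective phat_mix.
apply: Delta_qcvx => //; last exact: pXY_pmf.
- exact: phat_pmf p_pmf (S_valid _ S1).
- exact: phat_pmf p_pmf (S_valid _ S2).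
Qed.

End ProblemConvexity.

Lemma feasible1_convex (R : realFieldType) (D X : finType)
    (p : D -> X -> bool -> R) pYT J eps delta c :
  J_quasiconvex1 J -> convex_set_map (feasible1 p pYT J eps delta c).
Proof.
move=> J_qcvx M1 M2 t [i1 [ii1 v1]] [i2 [ii2 v2]] t01.
by split; [apply: constr_i_mix | split; [apply: constr_ii_mix | apply: valid_cond_mix]].
Qed.

Lemma feasible2_convex (R : realFieldType) (D X : finType)
    (p : D -> X -> bool -> R) J eps2 delta c :
  J_quasiconvex_joint J -> convex_set_map (feasible2 p J eps2 delta c).
Proof.
move=> J_qcvx M1 M2 t [i1 [ii1 v1]] [i2 [ii2 v2]] t01.
by split; [apply: constr_i'_mix | split; [apply: constr_ii_mix | apply: valid_cond_mix]].
Qed.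

Theorem proposition1 (R : realFieldType) (D X : finType)
  (p : D -> X -> bool -> R) (pYT : bool -> R)
  (delta : X * bool -> X * bool -> R)
  (eps : bool -> D -> R) (eps2 : bool -> D -> D -> R) (c : D -> X -> bool -> R)
  (Delta : (X -> bool -> R) -> (X -> bool -> R) -> R) (J : R -> R -> R) :
  is_pmf_DXY p -> is_pmf_Y pYT ->
  (forall a b, 0 <= delta a b) -> (forall a, delta a a = 0) ->
  (* original constraint (i) *)
  (Delta_convex1 Delta -> J_quasiconvex1 J ->
     convex_problem (feasible1 p pYT J eps delta c) (objective Delta p)) /\
  (Delta_quasiconvex1 Delta -> J_quasiconvex1 J ->
     quasiconvex_problem (feasible1 p pYT J eps delta c) (objective Delta p)) /\
  (* constraint (i) replaced by (i') *)
  (Delta_convex1 Delta -> J_quasiconvex_joint J ->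
     convex_problem (feasible2 p J eps2 delta c) (objective Delta p)) /\
  (Delta_quasiconvex1 Delta -> J_quasiconvex_joint J ->
     quasiconvex_problem (feasible2 p J eps2 delta c) (objective Delta p)).
Proof.
move=> p_pmf _ _ _.
have valid1 M : feasible1 p pYT J eps delta c M -> valid_cond M by case=> _ [].
have valid2 M : feasible2 p J eps2 delta c M -> valid_cond M by case=> _ [].
split; [|split; [|split]] => Delta_hyp J_qcvx; split.
- exact: feasible1_convex.
- exact: objective_convex.
- exact: feasible1_convex.
- exact: objective_quasiconvex.
- exact: feasible2_convex.
- exact: objective_convex.
- exact: feasible2_convex.
- exact: objective_quasiconvex.
Qed.
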